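(* Let $X$ be a Hausdorff space and $A\in\mathcal{F}(X)$. The following are equivalent: (a) $A$ is a weak $P$-point in $\mathcal{F}(X)$; (b) $A$ is a weak $P$-point in $\mathcal{F}_n(X)$ for each positive integer $n\geq|A|$; (c) every $x\in A$ is a weak $P$-point of $X$.
   Context: $\mathcal{F}(X)$ is the set of nonempty finite subsets of $X$ and $\mathcal{F}_n(X)$ the set of nonempty subsets with at most $n$ points, with the Vietoris topology (generated by $U^+=\{A: A\subset U\}$ and $U^-=\{A: A\cap U\neq\emptyset\}$ for $U$ open in $X$). A point $p$ of a space $Z$ is a weak $P$-point if $p\notin\overline{N}$ for every countable $N\subset Z-\{p\}$. *)

From mathcomp Require Import all_boot all_order all_algebra.
From mathcomp Require Import all_classical all_reals all_analysis.
Set Implicit Arguments. Unset Strict Implicit. Unset Printing Implicit Defensive.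
Local Open Scope classical_set_scope.
Local Open Scope card_scope.

Section Hyperspace.
Variable X : topologicalType.

Definition hypF : set (set X) := [set A | finite_set A /\ A !=set0].
Definition hypFn (n : nat) : set (set X) := [set A | hypF A /\ A #<= `I_n].

(* basic Vietoris sets: finite intersections of U^+ and V^- with U, V open *)
Definition vietoris_basic (B : set (set X)) : Prop :=
  exists (k m : nat) (U : 'I_k -> set X) (V : 'I_m -> set X),
    (forall i, open (U i)) /\ (forall j, open (V j)) /\
    B = [set A | (forall i, A `<=` U i) /\ (forall j, A `&` V j !=set0)].

Definition vietoris_open (S W : set (set X)) : Prop :=
  W `<=` S /\ forall A, W A ->
    exists B, vietoris_basic B /\ B A /\ B `&` S `<=` W.

Definition vietoris_closure (S N : set (set X)) : set (set X) :=
  [set A | S A /\ forall W, vietoris_open S W -> W A -> W `&` N !=set0].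

Definition weakP_hyp (S : set (set X)) (p : set X) : Prop :=
  S p /\ forall N, N `<=` S -> countable N -> N `<=` ~` [set p] ->
    ~ vietoris_closure S N p.

Definition weakP_point (x : X) : Prop :=
  forall N : set X, countable N -> N `<=` ~` [set x] -> ~ closure N x.

End Hyperspace.

From mathcomp Require Import all_boot all_order all_algebra.
From mathcomp Require Import all_classical all_reals all_analysis.
Local Open Scope classical_set_scope.
Local Open Scope card_scope.

(** If [x] in [A] is not a weak P-point, witnessed by a countable [N] accumulating
    at [x], then moving the point [x] of [A] to the points of [N] gives a countable
    family of finite sets accumulating at [A] in the Vietoris topology.
    Conversely, if every point of the finite set [A] is a weak P-point and [N] is a
    countable family of finite sets other than [A], the countably many points of
    [\bigcup N] outside [A] can be avoided by an open set [G] around [A]; then the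
    Vietoris neighbourhood of [A] made of the sets contained in [G] and meeting
    every [X \ (A \ {a})], [a] in [A], contains only subsets of [A] that contain
    all of [A], i.e. only [A] itself, so it misses [N]. Finiteness of [A] and the
    Hausdorff property make these [X \ (A \ {a})] open. *)

Section Hyperspace.
Set Implicit Arguments. Unset Strict Implicit.
Variable X : topologicalType.
Implicit Types (A C : set X) (S B : set (set X)) (x y : X).

Definition replace_point x y (z : X) : X := if z == x then y else z.

Lemma replace_point_image_neq A x y :
  A x -> y != x -> replace_point x y @` A <> A.
Proof.
move=> Ax /eqP yx eqA; have : (replace_point x y @` A) x by rewrite eqA.
by case=> z _; rewrite /replace_point; case: eqP => // _ /esym.
Qed.

Lemma replace_point_image_hypF A x y :
  hypF A -> A x -> hypF (replace_point x y @` A).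
Proof.
move=> [finA _] Ax; split; first exact: finite_image.
by exists (replace_point x y x); exists x.
Qed.

Lemma nbhs_replace_point_image B A x : vietoris_basic B -> B A -> A x ->
  \forall y \near x, B (replace_point x y @` A).
Proof.
move=> [k [m [U [V [Uo [Vo ->]]]]]] [AU AV] Ax.
have Ux : \forall y \near x, forall i, U i y.
  by apply: filter_forall => i; apply: open_nbhs_nbhs; split; [exact: Uo | exact: AU].
have Vx : \forall y \near x, forall j, V j x -> V j y.
  apply: filter_forall => j; have [Vjx|nVjx] := pselect (V j x).
    by apply: filterS (open_nbhs_nbhs (conj (Vo j) Vjx)) => y Vjy.
  by apply: nearW => y /nVjx.
near=> y; split.
- move=> i _ [z Az <-]; rewrite /replace_point.
  by case: eqP => _; [apply: (near Ux y) | exact: AU].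
- move=> j; have [Vjx|nVjx] := pselect (V j x).
    exists y; split; last exact: (near Vx y).
    by exists x => //; rewrite /replace_point eqxx.
  have [z [Az Vjz]] := AV j; exists z; split => //; exists z => //.
  by rewrite /replace_point; case: eqP => // zx; rewrite zx in Vjz.
Unshelve. all: by end_near.
Qed.

Lemma weakP_point_of_weakP_hyp S A x : weakP_hyp S A -> A x ->
  (forall y, y != x -> S (replace_point x y @` A)) -> weakP_point x.
Proof.
move=> [SA noclS] Ax Srepl N cN Nx clNx.
have Nneqx y : N y -> y != x by move=> Ny; apply/eqP; exact: Nx.
apply: (noclS ((fun y => replace_point x y @` A) @` N)).
- by move=> _ [y Ny <-]; apply/Srepl/Nneqx.
- exact: sub_countable (card_image_le _ _) cN.
- by move=> _ [y Ny <-]; apply: replace_point_image_neq => //; exact: Nneqx.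
split=> // W [_ Wopen] WA.
have [B [Bbasic [BA BSW]]] := Wopen A WA.
have [y [Ny By]] := clNx _ (nbhs_replace_point_image Bbasic BA Ax).
exists (replace_point x y @` A); split; last by exists y.
by apply: BSW; split => //; apply/Srepl/Nneqx.
Qed.

Lemma weakP_point_open_avoid x (M : set X) : weakP_point x ->
  countable M -> ~ M x -> exists2 U, open_nbhs x U & U `&` M = set0.
Proof.
move=> Px cM Mx; apply: contrapT => noU.
apply: (Px M cM) => [y My yx|B]; first by apply: Mx; rewrite -yx.
rewrite nbhsE => -[U xU UB]; apply: contrapT => noMB; apply: noU.
exists U => //; apply/seteqP; split=> // y [Uy My].
by apply: noMB; exists y; split => //; exact: UB.
Qed.

Lemma weakP_points_open_avoid A (M : set X) :
  (forall x, A x -> weakP_point x) -> countable M -> A `&` M = set0 ->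
  exists G, [/\ open G, A `<=` G & G `&` M = set0].
Proof.
move=> PA cM AM0.
have /choice [U AU] : forall x, exists U, A x -> open_nbhs x U /\ U `&` M = set0.
  move=> x; have [Ax|nAx] := pselect (A x); last by exists set0 => /nAx.
  have nMx : ~ M x by move=> Mx; have : (A `&` M) x by []; rewrite AM0.
  by have [U xU UM0] := weakP_point_open_avoid (PA x Ax) cM nMx; exists U.
exists (\bigcup_(x in A) U x); split.
- by apply: bigcup_open => x /AU [[]].
- by move=> x Ax; exists x => //; have [[]] := AU x Ax.
- apply/seteqP; split=> // y [[x Ax Uxy] My].
  by have [_ <-] := AU x Ax.
Qed.

Lemma vietoris_basic_meet_each G A (V : X -> set X) :
  open G -> finite_set A -> (forall a, A a -> open (V a)) ->
  vietoris_basic [set C | C `<=` G /\ forall a, A a -> C `&` V a !=set0].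
Proof.
move=> Go /finite_seqP[s ->] Vo.
exists 1%N, (size s), (fun=> G), (fun j => V (tnth (in_tuple s) j)).
split=> //; split=> [j|]; first exact/Vo/mem_tnth.
apply/seteqP; split=> C [CG CV]; split.
- by [].
- by move=> j; apply/CV/mem_tnth.
- exact: CG ord0.
- move=> a sa.
  have ias : (index a s < size s)%N by rewrite index_mem.
  by have := CV (Ordinal ias); rewrite (tnth_nth a) /= nth_index.
Qed.

Lemma vietoris_open_basic S B : vietoris_basic B -> vietoris_open S (B `&` S).
Proof.
move=> Bbasic; split=> [C [] // | C [BC _]].
by exists B; split=> //; split.
Qed.

Lemma weakP_hyp_of_weakP_points S A : hausdorff_space X ->
  finite_set A -> S A -> (forall C, S C -> finite_set C) ->
  (forall x, A x -> weakP_point x) -> weakP_hyp S A.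
Proof.
move=> hX finA SA finS PA; split=> // N NS cN NA [_ clN].
pose M := \bigcup_(C in N) (C `\` A).
have cM : countable M.
  by apply: bigcup_countable => // C NC; apply/finite_set_countable/finite_setD/finS/NS.
have AM0 : A `&` M = set0 by apply/seteqP; split=> // x [Ax [C _ []]].
have [G [Go AG GM0]] := weakP_points_open_avoid PA cM AM0.
pose B := [set C | C `<=` G /\ forall a, A a -> C `&` ~` (A `\ a) !=set0].
have Bbasic : vietoris_basic B.
  apply: vietoris_basic_meet_each => // a _; rewrite openC.
  apply: (accessible_finite_set_closed.1 (hausdorff_accessible hX)).
  exact: finite_setD.
have BA : B A by split=> // a Aa; exists a; split=> // -[_ /(_ erefl)].
have [C [[[CG CmeetA] SC] NC]] := clN _ (vietoris_open_basic S Bbasic) (conj BA SA).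
have CA : C `<=` A.
  move=> z Cz; apply: contrapT => nAz.
  have GMz : (G `&` M) z by split; [exact: CG | exists C].
  by rewrite GM0 in GMz.
apply: (NA C NC); apply/seteqP; split=> // a Aa.
have [w [Cw nAaw]] := CmeetA a Aa.
have [<- //|wa] := pselect (w = a).
by exfalso; apply: nAaw; split; [exact: CA|].
Qed.

Lemma hypF_card_le_I A : hypF A -> exists2 n, (0 < n)%N & A #<= `I_n.
Proof.
move=> [[n An] [a Aa]]; exists n; last by move: An; rewrite card_eq_le => /andP[].
case: n An => //; rewrite II0 card_eq0 => /eqP A0.
by move: Aa; rewrite A0.
Qed.

End Hyperspace.

Theorem proposition4p3 (X : topologicalType) (hX : hausdorff_space X)
  (A : set X) (hA : hypF A) :
  [<-> weakP_hyp (hypF (X:=X)) A;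
       (forall n : nat, (0 < n)%N -> A #<= `I_n -> weakP_hyp (hypFn (X:=X) n) A);
       (forall x, A x -> weakP_point x)].
Proof.
have [finA _] := hA.
have pointwise_of_hypF : weakP_hyp (hypF (X:=X)) A -> forall x, A x -> weakP_point x.
  move=> PA x Ax; apply: (weakP_point_of_weakP_hyp PA Ax) => y _.
  exact: replace_point_image_hypF.
tfae.
- move=> PA n _ AleIn; apply: weakP_hyp_of_weakP_points => //.
  + by move=> C [[]].
  + exact: pointwise_of_hypF.
- move=> PnA x Ax; have [n n_gt0 AleIn] := hypF_card_le_I hA.
  apply: (weakP_point_of_weakP_hyp (PnA n n_gt0 AleIn) Ax) => y _; split.
  + exact: replace_point_image_hypF.
  + exact: card_le_trans (card_image_le _ _) AleIn.
- by move=> PA; apply: weakP_hyp_of_weakP_points => // C [].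
Qed.
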